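(* For every integer $n\geq 5$, $\pi(\overline{C_n})=4$.
   Context: $C_n$ is the cycle on vertices $v_1,\dots,v_n$ (with $v_i$ adjacent to $v_{i+1}$, indices mod $n$), and $\overline{C_n}$ is its complement: two distinct vertices are adjacent in $\overline{C_n}$ iff they are not adjacent in $C_n$; for $n\geq 5$ it is connected. For a connected graph $G$, $d(x,y)$ denotes the graph distance. For a permutation $f$ of $V(G)$ and distinct vertices $x,y$, let $\delta_f(x,y)=|d(x,y)-d(f(x),f(y))|$, and let $\delta_f(G)=\sum \delta_f(x,y)$, the sum over all unordered pairs $\{x,y\}$ of distinct vertices. $\pi(G)$ denotes the smallest positive value of $\delta_f(G)$ over all permutations $f$ of $V(G)$. *)

From mathcomp Require Import all_boot all_fingroup.
Set Implicit Arguments. Unset Strict Implicit. Unset Printing Implicit Defensive.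

Fixpoint walk_within (T : finType) (e : rel T) (k : nat) (x y : T) : bool :=
  match k with
  | 0 => x == y
  | k'.+1 => walk_within e k' x y || [exists z, e x z && walk_within e k' z y]
  end.

(* Graph distance: least k with a walk of length <= k (hence a walk of length
   exactly k) from x to y; in a connected graph it is < #|T|.
   (Returns #|T| if y is unreachable; irrelevant for connected graphs.) *)
Definition gdist (T : finType) (e : rel T) (x y : T) : nat :=
  find (fun k => walk_within e k x y) (iota 0 #|T|).

Definition cycle_adj (n : nat) : rel 'I_n :=
  fun x y => (val y == (val x).+1 %% n) || (val x == (val y).+1 %% n).

Definition ccycle_adj (n : nat) : rel 'I_n :=
  fun x y => (x != y) && ~~ cycle_adj x y.

Definition absdiff (a b : nat) : nat := (a - b) + (b - a).

Definition delta_perm (n : nat) (e : rel 'I_n) (f : {perm 'I_n}) : nat :=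
  \sum_(x < n) \sum_(y < n | x < y) absdiff (gdist e x y) (gdist e (f x) (f y)).

Definition is_pi (n : nat) (e : rel 'I_n) (m : nat) : Prop :=
  0 < m /\ (exists f : {perm 'I_n}, delta_perm e f = m) /\
  (forall f : {perm 'I_n}, 0 < delta_perm e f -> m <= delta_perm e f).

From mathcomp Require Import all_boot all_fingroup zify.

Set Implicit Arguments.
Unset Strict Implicit.
Unset Printing Implicit Defensive.

(* For n >= 5 the complement of C_n has diameter 2: two distinct vertices are
   at distance 1 or 2 according as they are non-adjacent or adjacent in C_n.
   Hence delta_f counts the pairs whose C_n-adjacency is changed by f.  Since
   C_n is 2-regular, at every vertex x the number of C_n-edges at x destroyed
   by f equals the number created, and delta_f is the number of destroyed
   edge-ends, an even number.  If it is positive, a destroyed edge xy and an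
   edge xz created at x give three vertices x, y, z each losing an edge, so
   delta_f >= 4; swapping two adjacent vertices attains 4. *)

Definition compl_rel (T : eqType) (A : rel T) : rel T :=
  fun x y => (x != y) && ~~ A x y.

Lemma exists_rel_eq (T : finType) (e : rel T) x y :
  [exists z, e x z && (z == y)] = e x y.
Proof.
apply/existsP/idP => [[z /andP[exz /eqP <-]] // | exy].
by exists y; rewrite exy eqxx.
Qed.

Lemma gdist_walk2 (T : finType) (e : rel T) x y :
  2 < #|T| -> walk_within e 2 x y ->
  gdist e x y = if x == y then 0 else if e x y then 1 else 2.
Proof.
move=> T_gt2 w2; rewrite /gdist.
have -> : iota 0 #|T| = [:: 0, 1, 2 & iota 3 (#|T| - 3)].
  by case: #|T| T_gt2 => [|[|[|m]]] //=; rewrite !subSS subn0.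
move: w2; rewrite /= !exists_rel_eq => ->.
by case: (x == y); case: (e x y).
Qed.

Section ComplementDiameter.

Variables (T : finType) (A : rel T) (d : nat).
Hypothesis A_sym : symmetric A.
Hypothesis A_deg : forall x, #|A x| <= d.
Hypothesis T_big : 2 * d < #|T|.

Lemma compl_walk2 x y : walk_within (compl_rel A) 2 x y.
Proof.
have [-> | nxy] := eqVneq x y; first by rewrite /= eqxx.
have [Axy | nAxy] := boolP (A x y); last first.
  by rewrite /= exists_rel_eq /compl_rel nxy nAxy !orbT.
have card_nbhds : #|[predU A x & A y]| <= 2 * d.
  rewrite mul2n -addnn; apply: leq_trans (leq_add (A_deg x) (A_deg y)).
  by rewrite -cardUI leq_addr.
have : 0 < #|[predC [predU A x & A y]]|.
  by rewrite -(ltn_add2l #|[predU A x & A y]|) addn0 cardC (leq_ltn_trans card_nbhds).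
case/card_gt0P => z; rewrite !inE negb_or -!topredE /= => /andP[nAxz nAyz].
have nxz : x != z by apply: contraNneq nAyz => <-; rewrite A_sym.
have nzy : z != y by apply: contraNneq nAxz => ->.
apply/orP; right; apply/existsP; exists z.
by rewrite exists_rel_eq /compl_rel nxz nAxz nzy (A_sym z) nAyz orbT.
Qed.

Lemma gdist_compl x y : 2 < #|T| ->
  gdist (compl_rel A) x y = if x == y then 0 else if A x y then 2 else 1.
Proof.
move=> T_gt2; rewrite gdist_walk2 ?compl_walk2 // /compl_rel.
by case: (x == y); case: (A x y).
Qed.

Lemma absdiff_gdist_compl (f : {perm T}) x y : 2 < #|T| -> x != y ->
  absdiff (gdist (compl_rel A) x y) (gdist (compl_rel A) (f x) (f y)) =
  (A x y != A (f x) (f y)).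
Proof.
move=> T_gt2 nxy; have nfxy : f x != f y by rewrite (inj_eq perm_inj).
rewrite !gdist_compl // (negbTE nxy) (negbTE nfxy).
by case: (A x y); case: (A (f x) (f y)).
Qed.

End ComplementDiameter.

Lemma delta_perm_compl n (A : rel 'I_n) d (f : {perm 'I_n}) :
    symmetric A -> (forall v, #|A v| <= d) -> 2 * d < n -> 2 < n ->
  delta_perm (compl_rel A) f =
  \sum_(x < n) \sum_(y < n | x < y) (A x y != A (f x) (f y)).
Proof.
move=> A_sym A_deg n_big n_gt2; apply: eq_bigr => x _; apply: eq_bigr => y lt_xy.
by rewrite (absdiff_gdist_compl A_sym A_deg) ?card_ord ?neq_ltn ?lt_xy.
Qed.

Lemma card_sum_bool (T : finType) (P : pred T) : #|P| = \sum_(x : T) (P x : nat).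
Proof. by rewrite -sum1_card big_mkcond. Qed.

Lemma sum_sym_ltn n (M : 'I_n -> 'I_n -> nat) :
  (forall x y, M x y = M y x) -> (forall x, M x x = 0) ->
  \sum_(x < n) \sum_(y < n) M x y = 2 * \sum_(x < n) \sum_(y < n | x < y) M x y.
Proof.
move=> M_sym M0.
have split_row x : \sum_(y < n) M x y =
    \sum_(y < n | x < y) M x y + \sum_(y < n | y < x) M x y.
  rewrite (bigID (fun y : 'I_n => x < y)) /=; congr (_ + _).
  rewrite (bigID (fun y : 'I_n => y < x)) /= [X in _ + X]big1 ?addn0.
    by apply: eq_bigl => y; rewrite andb_idl // => /ltnW; rewrite leqNgt.
  move=> y; rewrite -!leqNgt => /andP[le_yx le_xy].
  by rewrite (_ : y = x) ?M0 //; apply/val_inj/eqP; rewrite eqn_leq le_yx.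
rewrite (eq_bigr _ (fun x _ => split_row x)) big_split /= mul2n -addnn.
congr (_ + _); rewrite (exchange_big_dep xpredT) //=.
by apply: eq_bigr => x _; apply: eq_bigr => y _; rewrite M_sym.
Qed.

Section Relabelling.

Variables (n : nat) (A : rel 'I_n) (d : nat).
Hypothesis A_sym : symmetric A.
Hypothesis A_irr : irreflexive A.
Hypothesis A_reg : forall x, #|A x| = d.
Variable f : {perm 'I_n}.

Definition lost x := #|[pred y | A x y && ~~ A (f x) (f y)]|.
Definition gained x := #|[pred y | ~~ A x y && A (f x) (f y)]|.

Lemma card_perm_nbhd x : #|[pred y | A (f x) (f y)]| = d.
Proof.
rewrite -(A_reg (f x)) -(card_image (@perm_inj _ f)); apply: eq_card => z.
by rewrite -[z](permKV f) (mem_image (@perm_inj _ f)) inE.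
Qed.

Lemma lost_eq_gained x : lost x = gained x.
Proof.
have lost_split : d = \sum_(y < n) (A x y && A (f x) (f y) : nat) + lost x.
  rewrite -(A_reg x) /lost !card_sum_bool -big_split; apply: eq_bigr => y _ /=.
  by case: (A x y); case: (A (f x) (f y)).
have gained_split : d = \sum_(y < n) (A x y && A (f x) (f y) : nat) + gained x.
  rewrite -(card_perm_nbhd x) /gained !card_sum_bool -big_split; apply: eq_bigr => y _ /=.
  by case: (A x y); case: (A (f x) (f y)).
lia.
Qed.

Lemma sum_changes_lost :
  \sum_(x < n) \sum_(y < n | x < y) (A x y != A (f x) (f y)) = \sum_(x < n) lost x.
Proof.
apply/eqP; rewrite -(eqn_pmul2l (isT : 0 < 2)) -sum_sym_ltn; first last.
- by move=> x; rewrite !A_irr.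
- by move=> x y; rewrite A_sym (A_sym (f x)).
rewrite mul2n -addnn {2}(eq_bigr _ (fun x _ => lost_eq_gained x)) -big_split.
apply/eqP/eq_bigr => x _; rewrite /lost /gained !card_sum_bool -big_split.
apply: eq_bigr => y _ /=.
by case: (A x y); case: (A (f x) (f y)).
Qed.

Lemma sum_lost_even : ~~ odd (\sum_(x < n) lost x).
Proof.
rewrite (eq_bigr _ (fun x _ => card_sum_bool _)) sum_sym_ltn ?mul2n ?odd_double //.
- by move=> x y /=; rewrite A_sym (A_sym (f x)).
- by move=> x /=; rewrite A_irr.
Qed.

Lemma sum_lost_ge4 : 0 < \sum_(x < n) lost x -> 4 <= \sum_(x < n) lost x.
Proof.
move=> sum_gt0.
have [x lost_x] : exists x, 0 < lost x.
  move: sum_gt0; rewrite lt0n sum_nat_eq0 negb_forall => /existsP[x].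
  by rewrite -lt0n; exists x.
have gained_x : 0 < gained x by rewrite -lost_eq_gained.
case/card_gt0P: (lost_x) => y; rewrite inE => /andP[Axy nBxy].
case/card_gt0P: gained_x => z; rewrite inE => /andP[nAxz Bxz].
have lost_y : 0 < lost y.
  by apply/card_gt0P; exists x; rewrite inE A_sym Axy (A_sym (f y)) nBxy.
have lost_z : 0 < lost z.
  by rewrite lost_eq_gained; apply/card_gt0P; exists x; rewrite inE A_sym nAxz A_sym.
have yx : y != x by apply: contraTneq Axy => ->; rewrite A_irr.
have zx : z != x by apply: contraTneq Bxz => ->; rewrite A_irr.
have zy : z != y by apply: contraNneq nAxz => ->.
have ge3 : 3 <= \sum_(v < n) lost v.
  rewrite (bigD1 x) // (bigD1 y) // (bigD1 z) /=; last by rewrite zx zy.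
  lia.
by move: ge3 sum_lost_even; rewrite leq_eqVlt => /orP[/eqP <- | ].
Qed.

End Relabelling.

Lemma cycle_adj_sym n : symmetric (@cycle_adj n).
Proof. by move=> x y; rewrite /cycle_adj orbC. Qed.

Lemma modn_succ m n : m < n -> m.+1 %% n = if m == n.-1 then 0 else m.+1.
Proof.
move=> lt_mn; case: eqP => [-> | ne_m]; first by rewrite prednK ?modnn //; lia.
by rewrite modn_small //; lia.
Qed.

Lemma cycle_adjE n (x y : 'I_n) : cycle_adj x y =
  (y == (if x == n.-1 :> nat then 0 else x.+1) :> nat) ||
  (x == (if y == n.-1 :> nat then 0 else y.+1) :> nat).
Proof. by rewrite /cycle_adj !modn_succ ?ltn_ord. Qed.

Lemma cycle_adj_irr n : 1 < n -> irreflexive (@cycle_adj n).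
Proof. by move=> n_gt1 x; rewrite cycle_adjE orbb; have := ltn_ord x; case: ifP; lia. Qed.

Lemma card_cycle_adj n (x : 'I_n) : 2 < n -> #|cycle_adj x| = 2.
Proof.
move=> n_gt2.
have -> : #|cycle_adj x| = #|pred2 (ordS x) (ord_pred x)|.
  apply: eq_card => y; rewrite -topredE /= !inE.
  change ((y == ordS x) || (x == ordS y) = (y == ordS x) || (y == ord_pred x)).
  by rewrite -[x == _](inj_eq (@ord_pred_inj n)) ordSK (eq_sym _ y).
rewrite card2 -(inj_eq (@ordS_inj n)) ord_predK.
suff -> : ordS (ordS x) != x by [].
apply/eqP => /(congr1 val) /=; rewrite !modn_succ ?ltn_pmod ?ltn_ord //.
all: have := ltn_ord x; repeat case: ifP; lia.
Qed.

Lemma sum_lost_cycle_tperm m :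
  \sum_(x < m.+4) lost (@cycle_adj _) (tperm ord0 (inord 1)) x = 4.
Proof.
set t := tperm _ _.
have val_t (x : 'I_m.+4) :
    t x = (if x == 0 :> nat then 1 else if x == 1 :> nat then 0 else x) :> nat.
  rewrite /t; case: tpermP => [-> | -> | ne0 ne1] /=; rewrite ?inordK //.
  case: eqP => [x0 | _]; first by case: ne0; apply: val_inj.
  by case: eqP => [x1 | _] //; case: ne1; apply: val_inj; rewrite /= inordK.
apply/eqP; rewrite eqn_leq; apply/andP; split; last first.
  have card_adj (x : 'I_m.+4) : #|cycle_adj x| = 2 by exact: card_cycle_adj.
  apply: (sum_lost_ge4 (@cycle_adj_sym _) (cycle_adj_irr _) card_adj) => //.
  rewrite (bigD1 ord0) //=; apply: ltn_addr; apply/card_gt0P; exists ord_max.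
  by rewrite inE !cycle_adjE !val_t /= eqxx.
(* The swap of 0 and 1 breaks exactly the C_n-edges {0, n-1} and {1, 2}. *)
pose s : seq ('I_m.+4 * 'I_m.+4) :=
  [:: (ord0, ord_max); (ord_max, ord0); (inord 1, inord 2); (inord 2, inord 1)].
rewrite (eq_bigr _ (fun x _ => card_sum_bool _)) pair_bigA /=.
apply: leq_trans (card_size s); rewrite card_sum_bool; apply: leq_sum => [[x y]] _ /=.
case lost_xy : (_ && _) => //; move: lost_xy.
rewrite lt0b !xpair_eqE -!val_eqE /= ?inordK // !cycle_adjE !val_t /=.
by have := ltn_ord x; have := ltn_ord y; repeat (case: ifP => /=); lia.
Qed.

Theorem mainTheorem1 (n : nat) : 5 <= n -> is_pi (@ccycle_adj n) 4.
Proof.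
move=> n_ge5; have n_gt2 : 2 < n := ltnW (ltnW n_ge5).
have adj_sym := @cycle_adj_sym n.
have adj_irr := cycle_adj_irr (ltnW n_gt2).
have adj_reg (x : 'I_n) := card_cycle_adj x n_gt2.
have delta_lost f : delta_perm (@ccycle_adj n) f = \sum_(x < n) lost (@cycle_adj n) f x.
  have adj_deg (v : 'I_n) : #|cycle_adj v| <= 2 by rewrite adj_reg.
  rewrite (delta_perm_compl f adj_sym adj_deg) //.
  exact: sum_changes_lost adj_sym adj_irr adj_reg f.
split=> //; split=> [|f]; last by rewrite delta_lost; apply: sum_lost_ge4.
case: n {n_gt2 adj_sym adj_irr adj_reg} delta_lost n_ge5
  => [|[|[|[|m]]]] // delta_lost _.
by exists (tperm ord0 (inord 1)); rewrite delta_lost sum_lost_cycle_tperm.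
Qed.
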